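(* Let $N\ge1$ be an integer, let $\alpha>-1$ be real, and for $z\in\mathbb{C}\setminus\{0\}$ define $$H(z,N,\alpha)=\frac{\Gamma(N+1)}{(\alpha+2)_N}\sum_{m=0}^{N-1}\frac{(\alpha+1)_m}{m!}\,z^{-m}.$$ Then $$H(z,N,\alpha)=\frac{N}{N+\alpha+1}\,z^{1-N}\,{}_2F_1\!\left(\begin{matrix}1-N,\ 1\\ \alpha+2\end{matrix};1-z\right).$$
   Context: $(a)_k=a(a+1)\cdots(a+k-1)$ is the Pochhammer symbol, $(a)_0=1$. ${}_2F_1\!\left(\begin{matrix}1-N,1\\ c\end{matrix};u\right)=\sum_{k=0}^{N-1}\frac{(1-N)_k(1)_k}{(c)_k\,k!}u^k$ (a polynomial in $u$). $H(z,N,\alpha)$ is the $z$-transform of the zeroth-order orthogonal (Hahn, with $\beta=0$) low-pass filter with impulse response $\frac{\Gamma(N+1)}{(\alpha+2)_N}\frac{(\alpha+1)_m}{m!}$, $0\le m\le N-1$. *)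

(* complex numbers are R[i] = complex R for a real closed field R
   (e.g. the real numbers); alpha is a real parameter embedded as (alpha%:C)%C. *)
From HB Require Import structures.
From mathcomp Require Import all_boot all_order all_algebra.
From mathcomp Require Import complex.
Set Implicit Arguments. Unset Strict Implicit. Unset Printing Implicit Defensive.
Import Order.TTheory GRing.Theory Num.Theory.
Local Open Scope ring_scope.

Definition poch {F : fieldType} (a : F) (k : nat) : F :=
  \prod_(i < k) (a + i%:R).

Definition hyp2F1_trunc {F : fieldType} (N : nat) (c u : F) : F :=
  \sum_(k < N) (poch (1 - N%:R) k * poch 1 k) / (poch c k * (k`!)%:R) * u ^+ k.

Definition Hfilt {R : rcfType} (z : R[i]) (N : nat) (alpha : R) : R[i] :=
  (N`!)%:R / poch ((alpha%:C)%C + 2) N *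
  \sum_(m < N) poch ((alpha%:C)%C + 1) m / (m`!)%:R * z ^- m.

From HB Require Import structures.
From mathcomp Require Import all_boot all_order all_algebra.
From mathcomp Require Import complex.
From mathcomp Require Import ring lra zify.
Import Order.TTheory GRing.Theory Num.Theory.
Local Open Scope ring_scope.

(* Write n = N - 1, c = alpha + 2 and a = c - 1.  After multiplying by z^n,
   both sides become polynomials of degree n in z, and both satisfy the same
   first order recurrence in n: the reversed partial sum
   g_n(z) = sum_(m <= n) (a)_m / m! z^(n-m) obeys g_(n+1) = z g_n + (a)_(n+1)/(n+1)!,
   while the contiguous relation between the terminating series gives
   2F1(-n-1,1;c;1-z) = (n+1)/(c+n) z 2F1(-n,1;c;1-z) + a/(c+n).
   Induction on n then identifies 2F1(-n,1;c;1-z) with n!/(c)_n g_n(z). *)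

Section Pochhammer.
Context {F : fieldType}.
Implicit Type x : F.

Lemma poch0 x : poch x 0 = 1.
Proof. by rewrite /poch big_ord0. Qed.

Lemma pochS x k : poch x k.+1 = poch x k * (x + k%:R).
Proof. by rewrite /poch big_ord_recr. Qed.

Lemma pochSl x k : poch x k.+1 = x * poch (x + 1) k.
Proof.
rewrite /poch big_ord_recl addr0; congr (_ * _); apply: eq_bigr => i _.
by rewrite lift0 -natr1 addrA addrAC.
Qed.

Lemma poch1 k : poch (1 : F) k = k`!%:R.
Proof.
elim: k => [|k IH]; first by rewrite poch0.
by rewrite pochS IH factS natrM mulrC addrC -natr1.
Qed.

Lemma poch_neq0 x k : (forall i, x + i%:R != 0) -> poch x k != 0.
Proof. by move=> hx; apply/prodf_neq0 => i _. Qed.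

End Pochhammer.

Section TerminatingSeries.
Context {F : numFieldType}.

Lemma fact_neq0 k : k`!%:R != 0 :> F.
Proof. by rewrite pnatr_eq0 -lt0n fact_gt0. Qed.

(* 2F1(-n, 1; c; w), with (1)_k / k! already cancelled. *)
Definition hyp2F1_negn1 (n : nat) (c w : F) : F :=
  \sum_(k < n.+1) poch (- n%:R) k / poch c k * w ^+ k.

(* z^n times the sum in Hfilt, with a = alpha + 1. *)
Definition filter_poly (a : F) (n : nat) (z : F) : F :=
  \sum_(m < n.+1) poch a m / m`!%:R * z ^+ (n - m).

Lemma hyp2F1_truncE n c w : hyp2F1_trunc n.+1 c w = hyp2F1_negn1 n c w.
Proof.
apply: eq_bigr => k _; rewrite poch1.
have -> : 1 - n.+1%:R = - n%:R :> F by rewrite -natr1 opprD addrCA subrr addr0.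
by rewrite invfM mulrACA divff ?fact_neq0 // mulr1.
Qed.

Lemma filter_polyS a n z :
  filter_poly a n.+1 z = z * filter_poly a n z + poch a n.+1 / n.+1`!%:R.
Proof.
rewrite /filter_poly big_ord_recr /= subnn expr0 mulr1; congr (_ + _).
rewrite mulr_sumr; apply: eq_bigr => i _.
by rewrite mulrCA -exprS subSn // -ltnS.
Qed.

Lemma filter_polyE a n z : z != 0 ->
  z ^- n * filter_poly a n z = \sum_(m < n.+1) poch a m / m`!%:R * z ^- m.
Proof.
move=> hz; rewrite mulr_sumr; apply: eq_bigr => i _.
have hi : (i <= n)%N by rewrite -ltnS.
rewrite mulrCA; congr (_ * _).
by rewrite -{1}(subnK hi) exprD invfM mulrAC mulVf ?expf_neq0 // mul1r.
Qed.

Variable c : F.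
Hypothesis c_shift_neq0 : forall i, c + i%:R != 0.

Lemma poch_negn_ratioS n k :
  poch (- n.+1%:R) k.+1 / poch c k.+1 =
  n.+1%:R / (c + n%:R) *
    (poch (- n%:R) k.+1 / poch c k.+1 - poch (- n%:R) k / poch c k).
Proof.
have hck := poch_neq0 c k c_shift_neq0.
have hcn := c_shift_neq0 n; have hckS := c_shift_neq0 k.
rewrite (pochSl (- n.+1%:R)) !pochS.
have -> : - n.+1%:R + 1 = - n%:R :> F by rewrite -natr1 opprD addrNK.
by field; rewrite hck hcn hckS.
Qed.

Lemma hyp2F1_negn1S n w :
  hyp2F1_negn1 n.+1 c w =
  n.+1%:R / (c + n%:R) * (1 - w) * hyp2F1_negn1 n c w + (c - 1) / (c + n%:R).
Proof.
set f := hyp2F1_negn1 n c w.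
have hcn := c_shift_neq0 n.
have shifted : \sum_(k < n.+1) poch (- n%:R) k.+1 / poch c k.+1 * w ^+ k.+1
               = f - 1.
  rewrite big_ord_recr /= pochS addNr mulr0 !mul0r addr0.
  by rewrite /f /hyp2F1_negn1 big_ord_recl !poch0 divr1 mulr1 addrC addKr.
have multiplied : \sum_(k < n.+1) poch (- n%:R) k / poch c k * w ^+ k.+1 = w * f.
  by rewrite /f mulr_sumr; apply: eq_bigr => k _; rewrite exprS mulrCA.
rewrite /hyp2F1_negn1 big_ord_recl !poch0 divr1 mulr1.
under eq_bigr => k _ do rewrite lift0 poch_negn_ratioS mulrBr mulrBl -mulrA.
rewrite sumrB -!mulr_sumr shifted.
under eq_bigr => k _ do rewrite -mulrA.
by rewrite -mulr_sumr multiplied; field.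
Qed.

Lemma hyp2F1_negn1_filter_poly n z :
  hyp2F1_negn1 n c (1 - z) = n`!%:R / poch c n * filter_poly (c - 1) n z.
Proof.
elim: n => [|n IH].
  by rewrite /hyp2F1_negn1 /filter_poly !big_ord1 !poch0 !divr1 !mulr1.
have hcn := poch_neq0 c n c_shift_neq0; have hcS := c_shift_neq0 n.
rewrite hyp2F1_negn1S IH filter_polyS subKr factS natrM pochS.
rewrite (pochSl (c - 1)) subrK.
have hn1 : 1 + n%:R != 0 :> F by rewrite addrC natr1 pnatr_eq0.
by field; rewrite fact_neq0 hn1 hcS hcn.
Qed.

End TerminatingSeries.

Lemma complex_shift_neq0 (R : rcfType) (alpha : R) (k : nat) :
  -1 < alpha -> (alpha%:C)%C + 2 + k%:R != 0 :> R[i].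
Proof.
move=> ha; apply: lt0r_neq0.
have -> : (alpha%:C)%C + 2 + k%:R = ((alpha + 2 + k%:R)%:C)%C.
  by rewrite !rmorphD !rmorph_nat.
rewrite -(rmorph0 (real_complex R)) ltcR.
have : 0 <= k%:R :> R by exact: ler0n.
lra.
Qed.

Theorem mainTheorem3 (R : rcfType) (N : nat) (alpha : R) (z : R[i]) :
  (1 <= N)%N -> -1 < alpha -> z != 0 ->
  Hfilt z N alpha =
  N%:R / (N%:R + (alpha%:C)%C + 1) * z ^ (1 - (N : int)) *
  hyp2F1_trunc N ((alpha%:C)%C + 2) (1 - z).
Proof.
case: N => [//|n] _ ha hz.
set c : R[i] := (alpha%:C)%C + 2.
have hc k : c + k%:R != 0 by exact: complex_shift_neq0.
have -> : 1 - (n.+1 : int) = - (n : int) by lia.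
rewrite hyp2F1_truncE hyp2F1_negn1_filter_poly // -exprnN /Hfilt -/c.
have -> : (alpha%:C)%C + 1 = c - 1 by rewrite /c; ring.
rewrite -filter_polyE // pochS factS natrM.
have -> : n.+1%:R + (alpha%:C)%C + 1 = c + n%:R by rewrite /c -natr1; ring.
have hpc := poch_neq0 _ n hc; have hcn := hc n; clearbody c.
by field; rewrite hpc hcn expf_neq0.
Qed.
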